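(* Let $\mathrm{Imp}$ be the category of implication algebras and their homomorphisms. If an implication algebra $(X,\triangleright,1)$ carries an internal implication algebra structure in $\mathrm{Imp}$ (i.e. a homomorphism $*:X\times X\to X$, with the constant given by a homomorphism from the terminal algebra, satisfying the implication algebra identities), then $X$ is the one-element (terminal) implication algebra.
   Context: An implication algebra is a set $X$ with a binary operation $\triangleright$ and a constant $1$ satisfying: $x\triangleright x=1$; $(x\triangleright y)\triangleright x=x$; $(x\triangleright y)\triangleright y=(y\triangleright x)\triangleright x$; $x\triangleright(y\triangleright z)=y\triangleright(x\triangleright z)$. Homomorphisms preserve $\triangleright$ and $1$. *)

Record ImpAlg := {
  carrier :> Type;
  imp : carrier -> carrier -> carrier;
  one : carrier;
  imp_refl : forall x, imp x x = one;
  imp_absorb : forall x y, imp (imp x y) x = x;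
  imp_comm : forall x y, imp (imp x y) y = imp (imp y x) x;
  imp_exch : forall x y z, imp x (imp y z) = imp y (imp x z)
}.

Definition is_hom (A B : ImpAlg) (f : A -> B) : Prop :=
  (forall x y : A, f (imp A x y) = imp B (f x) (f y)) /\ f (one A) = one B.

(** Product algebra A x B (componentwise operations): the categorical product in Imp. *)
Definition prod_alg (A B : ImpAlg) : ImpAlg.
Proof.
  refine {| carrier := (A * B)%type;
            imp := fun p q => (imp A (fst p) (fst q), imp B (snd p) (snd q));
            one := (one A, one B) |}.
  - intros [a b]; simpl; rewrite !imp_refl; reflexivity.
  - intros [a b] [c d]; simpl; rewrite !imp_absorb; reflexivity.
  - intros [a b] [c d]; simpl; rewrite (imp_comm A a c), (imp_comm B b d); reflexivity.
  - intros [a b] [c d] [e g]; simpl; rewrite (imp_exch A a c e), (imp_exch B b d g); reflexivity.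
Defined.

Definition term_alg : ImpAlg.
Proof.
  refine {| carrier := unit; imp := fun _ _ => tt; one := tt |};
    intros; repeat match goal with u : unit |- _ => destruct u end; reflexivity.
Defined.


(* Since [*] is a homomorphism, applying it to [(d, 1) |> (d, d) = (1, d)]
   gives [1 * d = (d * 1) |> (d * d) = (d * 1) |> 1 = 1]. Absorption for [*]
   then yields [x = (x * x) * x = 1 * x = 1] for every [x]. *)

Lemma imp_one_l (X : ImpAlg) (x : X) : imp X (one X) x = x.
Proof. rewrite <- (imp_refl X x). apply imp_absorb. Qed.

Lemma imp_one_r (X : ImpAlg) (x : X) : imp X x (one X) = one X.
Proof.
  assert (H : imp X (imp X x (one X)) (imp X x (one X)) = one X) by apply imp_refl.
  rewrite imp_exch, imp_comm, imp_one_l, imp_refl in H. exact H.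
Qed.

Lemma hom_preserves_one (B : ImpAlg) (e : term_alg -> B) :
  is_hom term_alg B e -> e tt = one B.
Proof. intros [_ He]. exact He. Qed.

Lemma hom_diag_one_l (X : ImpAlg) (star : prod_alg X X -> X) :
  is_hom (prod_alg X X) X star ->
  (forall x : X, star (x, x) = one X) ->
  forall d : X, star (one X, d) = one X.
Proof.
  intros [Hs _] Hdiag d.
  pose proof (Hs (d, one X) (d, d)) as H; simpl in H.
  rewrite imp_refl, imp_one_l, Hdiag, imp_one_r in H.
  exact H.
Qed.

Theorem mainTheorem15 (X : ImpAlg)
  (star : prod_alg X X -> X) (e : term_alg -> X)
  (Hstar : is_hom (prod_alg X X) X star)
  (He : is_hom term_alg X e)
  (H1 : forall x : X, star (x, x) = e tt)
  (H2 : forall x y : X, star (star (x, y), x) = x)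
  (H3 : forall x y : X, star (star (x, y), y) = star (star (y, x), x))
  (H4 : forall x y z : X, star (x, star (y, z)) = star (y, star (x, z))) :
  forall x y : X, x = y.
Proof.
  assert (Hdiag : forall x : X, star (x, x) = one X).
  { intro x. rewrite H1. exact (hom_preserves_one X e He). }
  assert (Hone : forall x : X, x = one X).
  { intro x. rewrite <- (H2 x x), Hdiag.
    exact (hom_diag_one_l X star Hstar Hdiag x). }
  intros x y. rewrite (Hone x), (Hone y). reflexivity.
Qed.
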